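(* Let $k\ge1$, let $\alpha=(\alpha_1,\dots,\alpha_k)$ and $\beta=(\beta_1,\dots,\beta_k)$ be $k$-tuples of nonnegative integers, and let $\sigma,\tau$ be permutations of $\{1,\dots,k\}$. Write $\sigma(\alpha)=(\alpha_{\sigma_1},\dots,\alpha_{\sigma_k})$ and $\tau(\beta)=(\beta_{\tau_1},\dots,\beta_{\tau_k})$. If $\tilde M_k(\sigma(\alpha),\tau(\beta))\ne0$, then $\alpha_{\sigma_1}=\cdots=\alpha_{\sigma_{k-|\alpha|}}=0$ and $\beta_{\tau_1}=\cdots=\beta_{\tau_{k-|\beta|}}=0$ (conditions that are vacuous when $|\alpha|\ge k$, resp. $|\beta|\ge k$).
   Context: $|\alpha|=\sum_i\alpha_i$. For $k$-tuples $a=(a_1,\dots,a_k)$, $b=(b_1,\dots,b_k)$ of nonnegative integers, $\tilde M_k(a,b)=(-1)^{\sum_i b_i}\det(m_{ij})_{1\le i,j\le 2k}$, where for $1\le i\le k$, $1\le j\le 2k$: $m_{ij}=\Gamma(2k-i-j+2-a_i)^{-1}$ and $m_{k+i,j}=(-1)^{i+j-1}\Gamma(2k-i-j+2-b_i)^{-1}$, with the convention $1/\Gamma(m)=0$ for $m\in\{0,-1,-2,\dots\}$. *)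

From mathcomp Require Import all_boot all_order all_algebra.
Set Implicit Arguments. Unset Strict Implicit. Unset Printing Implicit Defensive.
Import Order.TTheory GRing.Theory Num.Theory.
Local Open Scope ring_scope.

Definition invGamma (m : int) : rat :=
  if (0 < m)%R then ((absz m).-1)`!%:R^-1 else 0.

Definition tsum (k : nat) (a : 'I_k -> nat) : nat := (\sum_(i < k) a i)%N.

(* The 2k x 2k matrix (m_{ij}) of the paper, with 0-based indices:
   for 0 <= i < k, 0 <= j < 2k (paper indices i+1, j+1):
     row i     : 1/Gamma(2k - i - j - a_i)
     row k + i : (-1)^(i+j+1) / Gamma(2k - i - j - b_i). *)
Definition Mmat (k : nat) (a b : 'I_k -> nat) : 'M[rat]_(k + k) :=
  \matrix_(r < k + k, c < k + k)
    match split r with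
    | inl i => invGamma ((k + k)%:Z - (i : nat)%:Z - (c : nat)%:Z - (a i)%:Z)
    | inr i => (-1) ^+ ((i : nat) + (c : nat) + 1)
               * invGamma ((k + k)%:Z - (i : nat)%:Z - (c : nat)%:Z - (b i)%:Z)
    end.

Definition Mtilde (k : nat) (a b : 'I_k -> nat) : rat :=
  (-1) ^+ (tsum b) * \det (Mmat a b).

(* Row i of the upper block of M depends on i only through i + a_i, and row
   k + i of the lower block depends, up to the sign (-1)^i, only through
   i + b_i; so if det M <> 0, then i |-> i + a_i and i |-> i + b_i are
   injective.  For such an a, whenever a_i > 0 the index m = i + a_i is either
   >= k or again has a_m > 0 (as m + a_m <> i + a_i = m).  Following the chain
   i < i + a_i < ... out of [0, k) shows that the a_j with j >= i add up to at
   least k - i, hence a_i = 0 for i < k - |a|. *)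

From mathcomp Require Import all_boot all_order all_algebra all_fingroup.
From mathcomp Require Import zify.
Set Implicit Arguments. Unset Strict Implicit. Unset Printing Implicit Defensive.
Import GRing.Theory.
Local Open Scope ring_scope.

Lemma det_prop_rows (R : idomainType) (n : nat) (A : 'M[R]_n) (i1 i2 : 'I_n)
    (c : R) :
  i1 != i2 -> row i1 A = c *: row i2 A -> \det A = 0.
Proof.
move=> neq_i12 rowA; apply/eqP/det0P.
exists (delta_mx 0 i1 - c *: delta_mx 0 i2).
  apply/eqP => /rowP/(_ i1)/eqP.
  by rewrite !mxE !eqxx (negbTE neq_i12) mulr0 subr0 oner_eq0.
by rewrite mulmxBl -scalemxAl -!rowE rowA subrr.
Qed.

Lemma subn_leq_sum_tail (k : nat) (a : 'I_k -> nat) :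
  injective (fun i : 'I_k => (i + a i)%N) ->
  forall i : 'I_k, (0 < a i)%N -> (k - i <= \sum_(j < k | i <= j) a j)%N.
Proof.
move=> inj_a i; move: {2}(k - i)%N (leqnn (k - i)) => n.
elim: n i => [|n IH] i le_ki_n a_pos; first exact: leq_trans le_ki_n (leq0n _).
have sum_tail : (\sum_(j < k | i <= j) a j = a i + \sum_(j < k | i < j) a j)%N.
  rewrite (bigD1 i) //=; congr (_ + _)%N; apply: eq_bigl => j.
  by rewrite ltn_neqAle andbC eq_sym.
rewrite sum_tail; case: (ltnP (i + a i) k) => [lt_m_k | le_k_m]; last by lia.
pose m := Ordinal lt_m_k.
have a_m_pos : (0 < a m)%N.
  rewrite lt0n; apply/eqP => a_m0.
  have /(congr1 val) /= : m = i by apply: inj_a; rewrite /= a_m0 addn0.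
  by lia.
have le_tails : (\sum_(j < k | m <= j) a j <= \sum_(j < k | i < j) a j)%N.
  by apply: (sub_le_big leqnn (fun x y => leq_addr y x)) => j /=; lia.
have le_km_n : (k - m <= n)%N by rewrite /=; lia.
by have := IH m le_km_n a_m_pos; rewrite /= in le_tails *; lia.
Qed.

Lemma prefix_eq0_of_inj_addn (k : nat) (a : 'I_k -> nat) :
  injective (fun i : 'I_k => (i + a i)%N) ->
  forall i : 'I_k, (i < k - tsum a)%N -> a i = 0%N.
Proof.
move=> inj_a i lt_i; case: (posnP (a i)) => // a_pos.
have := subn_leq_sum_tail inj_a a_pos.
have : (\sum_(j < k | i <= j) a j <= tsum a)%N.
  exact: (sub_le_big leqnn (fun x y => leq_addr y x)).
lia.
Qed.

Lemma tsum_perm (k : nat) (a : 'I_k -> nat) (s : 'S_k) :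
  tsum (fun i => a (s i)) = tsum a.
Proof. by rewrite /tsum [RHS](reindex_inj (@perm_inj _ s)). Qed.

Section MmatRows.

Variables (k : nat) (a b : 'I_k -> nat).

Lemma Mmat_lshift (i : 'I_k) (c : 'I_(k + k)) :
  Mmat a b (lshift k i) c = invGamma ((k + k)%:Z - (i + a i)%N%:Z - c%:Z).
Proof.
rewrite mxE (unsplitK (inl _ i)); congr invGamma; lia.
Qed.

Lemma Mmat_rshift (i : 'I_k) (c : 'I_(k + k)) :
  Mmat a b (rshift k i) c =
  (-1) ^+ (i + c + 1) * invGamma ((k + k)%:Z - (i + b i)%N%:Z - c%:Z).
Proof.
rewrite mxE (unsplitK (inr _ i)); congr (_ * invGamma _); lia.
Qed.

Hypothesis det_neq0 : \det (Mmat a b) != 0.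

Lemma Mmat_inj_top : injective (fun i : 'I_k => (i + a i)%N).
Proof.
move=> i j /= eq_ij; apply/eqP; apply: contraNT det_neq0 => neq_ij.
apply/eqP/(@det_prop_rows _ _ _ (lshift k i) (lshift k j) 1).
  by rewrite eq_lshift.
rewrite scale1r; apply/rowP => c.
by rewrite [LHS]mxE [RHS]mxE !Mmat_lshift eq_ij.
Qed.

Lemma Mmat_inj_bottom : injective (fun i : 'I_k => (i + b i)%N).
Proof.
move=> i j /= eq_ij; apply/eqP; apply: contraNT det_neq0 => neq_ij.
apply/eqP/(@det_prop_rows _ _ _ (rshift k i) (rshift k j) ((-1) ^+ (i + j))).
  by rewrite eq_rshift.
apply/rowP => c; rewrite [LHS]mxE [RHS]mxE [row _ _ _ _]mxE.
rewrite !Mmat_rshift eq_ij mulrA.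
congr (_ * _); rewrite -exprD.
have -> : (i + j + (j + c + 1) = i + c + 1 + j * 2)%N by lia.
by rewrite (exprD _ _ (j * 2)) exprM sqrr_sign mulr1.
Qed.

End MmatRows.

Theorem lemma5 (k : nat) (hk : (1 <= k)%N) (alpha beta : 'I_k -> nat)
    (sigma tau : 'S_k) :
  Mtilde (fun i => alpha (sigma i)) (fun i => beta (tau i)) != 0 ->
  (forall i : 'I_k, (i < k - tsum alpha)%N -> alpha (sigma i) = 0%N) /\
  (forall i : 'I_k, (i < k - tsum beta)%N -> beta (tau i) = 0%N).
Proof.
rewrite /Mtilde mulf_eq0 negb_or => /andP[_ det_neq0].
split.
  rewrite -(tsum_perm alpha sigma).
  exact: prefix_eq0_of_inj_addn (Mmat_inj_top det_neq0).
rewrite -(tsum_perm beta tau).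
exact: prefix_eq0_of_inj_addn (Mmat_inj_bottom det_neq0).
Qed.
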